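(* Assume $G$ is connected with $n\ge2$. Let $0=\lambda_1<\lambda_2\le\dots\le\lambda_n$ be the eigenvalues of $\Delta$. Let $S\subset V$ with $\emptyset\ne S\ne V$ and $R_S:=\mathrm{vol}\,S/\mathrm{vol}\,V\ne\frac12$. Define $$\tau_\rho(S)=\lambda_n^{-1}\log\Big(1+\tfrac12d_-^{r/2}(\mathrm{vol}\,S)^{-1/2}\Big),$$ $$\tau_t(S)=\frac1{\lambda_2}\log\left(\frac{(\mathrm{vol}\,S)^{1/2}(\mathrm{vol}\,S^c)^{1/2}}{(\mathrm{vol}\,V)^{1/2}|R_S-\frac12|d_-^{r/2}}\right).$$ If $\dfrac{\lambda_2}{\lambda_n}<\dfrac{\log\sqrt2}{\log\frac32}$, then $\tau_\rho(S)<\tau_t(S)$.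
   Context: $G=(V,E)$ is a finite undirected weighted graph with vertex set $V=\{1,\dots,n\}$. The weights satisfy $\omega_{ij}=\omega_{ji}\ge0$, with $\omega_{ij}>0$ iff $\{i,j\}\in E$, and $\omega_{ii}=0$. The degrees are $d_i=\sum_j\omega_{ij}>0$, and $d_-=\min_id_i$. A parameter $r\in[0,1]$ is fixed. For $S\subset V$, $S^c=V\setminus S$ and $\mathrm{vol}\,S=\sum_{i\in S}d_i^r$. The graph Laplacian is $(\Delta u)_i=d_i^{-r}\sum_j\omega_{ij}(u_i-u_j)$, and its eigenvalues are those of the matrix $D^{-r}(D-A)$, where $A=(\omega_{ij})$ and $D=\mathrm{diag}(d_i)$. *)

From Stdlib Require Import Reals Lra Lia.
Open Scope R_scope.

(* Vertices are 0, ..., n-1 (the paper's 1, ..., n shifted by one).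
   A weighted graph is given by w : nat -> nat -> R (only i,j < n matter). *)

Fixpoint rsum (n : nat) (f : nat -> R) : R :=
  match n with
  | O => 0
  | S k => rsum k f + f k
  end.

Fixpoint rminf (n : nat) (f : nat -> R) : R :=
  match n with
  | O => 0
  | S O => f O
  | S ((S _) as k) => Rmin (rminf k f) (f k)
  end.

Definition weighted_graph (n : nat) (w : nat -> nat -> R) : Prop :=
  forall i j, (i < n)%nat -> (j < n)%nat ->
    w i j = w j i /\ 0 <= w i j /\ w i i = 0.

Definition deg (n : nat) (w : nat -> nat -> R) (i : nat) : R :=
  rsum n (fun j => w i j).

Definition dmin (n : nat) (w : nat -> nat -> R) : R := rminf n (deg n w).

Inductive reach (n : nat) (w : nat -> nat -> R) (i : nat) : nat -> Prop :=
  | reach_refl : reach n w i i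
  | reach_step : forall j k, reach n w i j -> (j < n)%nat -> (k < n)%nat ->
      0 < w j k -> reach n w i k.

Definition connected (n : nat) (w : nat -> nat -> R) : Prop :=
  forall i j, (i < n)%nat -> (j < n)%nat -> reach n w i j.

Definition vol (n : nat) (w : nat -> nat -> R) (r : R) (S : nat -> bool) : R :=
  rsum n (fun i => if S i then Rpower (deg n w i) r else 0).

Definition compl (S : nat -> bool) : nat -> bool := fun i => negb (S i).
Definition fullset : nat -> bool := fun _ => true.

Definition laplacian (n : nat) (w : nat -> nat -> R) (r : R) (u : nat -> R) (i : nat) : R :=
  Rpower (deg n w i) (- r) * rsum n (fun j => w i j * (u i - u j)).

(* lam 0 <= lam 1 <= ... <= lam (n-1) are the eigenvalues of Delta counted with
   multiplicity: they are sorted and there is a basis of R^n consisting of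
   eigenvectors phi 0, ..., phi (n-1) with Delta phi_k = lam k * phi_k.
   (Delta is self-adjoint for the weighted inner product sum_i d_i^r u_i v_i,
   hence diagonalizable, so this is exactly the spectrum with multiplicities.) *)
Definition laplacian_spectrum (n : nat) (w : nat -> nat -> R) (r : R) (lam : nat -> R) : Prop :=
  (forall i j, (i <= j)%nat -> (j < n)%nat -> lam i <= lam j) /\
  exists phi : nat -> nat -> R,
    (forall c : nat -> R,
       (forall i, (i < n)%nat -> rsum n (fun k => c k * phi k i) = 0) ->
       forall k, (k < n)%nat -> c k = 0) /\
    (forall k i, (k < n)%nat -> (i < n)%nat ->
       laplacian n w r (phi k) i = lam k * phi k i).

Definition tau_rho (n : nat) (w : nat -> nat -> R) (r : R) (lam : nat -> R)
  (S : nat -> bool) : R :=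
  / lam (n - 1)%nat *
    ln (1 + / 2 * Rpower (dmin n w) (r / 2) * Rpower (vol n w r S) (- (1 / 2))).

Definition RS (n : nat) (w : nat -> nat -> R) (r : R) (S : nat -> bool) : R :=
  vol n w r S / vol n w r fullset.

Definition tau_t (n : nat) (w : nat -> nat -> R) (r : R) (lam : nat -> R)
  (S : nat -> bool) : R :=
  / lam 1%nat *
    ln (Rpower (vol n w r S) (1 / 2) * Rpower (vol n w r (compl S)) (1 / 2) /
        (Rpower (vol n w r fullset) (1 / 2) * Rabs (RS n w r S - / 2) *
         Rpower (dmin n w) (r / 2))).

(* A vertex of S contributes at least d_-^r to vol S, so d_-^r <= vol S and
   d_-^r <= vol S^c.  The first bound makes the argument of the logarithm in
   tau_rho at most 3/2; together with the second it makes the argument of the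
   logarithm in tau_t larger than 2, because (a - b)^2 m < a b (a + b) whenever
   0 < m <= min(a, b).  Since lambda_2 > 0 (an eigenvector with a nonpositive
   eigenvalue is constant on a connected graph, by a maximum principle), the
   hypothesis on lambda_2 / lambda_n gives
   tau_rho <= log(3/2) / lambda_n < log(sqrt 2) / lambda_2 < tau_t. *)
From Stdlib Require Import Reals Lra Lia.
Open Scope R_scope.

Lemma rsum_ext n f g :
  (forall i, (i < n)%nat -> f i = g i) -> rsum n f = rsum n g.
Proof.
  induction n as [|n IH]; intros Hfg; simpl; [reflexivity|].
  rewrite IH by (intros; apply Hfg; lia); rewrite Hfg by lia; reflexivity.
Qed.

Lemma rsum_plus n f g : rsum n (fun i => f i + g i) = rsum n f + rsum n g.
Proof. induction n as [|n IH]; simpl; [lra|]. rewrite IH; ring. Qed.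

Lemma rsum_scal n c f : rsum n (fun i => c * f i) = c * rsum n f.
Proof. induction n as [|n IH]; simpl; [lra|]. rewrite IH; ring. Qed.

Lemma rsum_nonneg n f :
  (forall j, (j < n)%nat -> 0 <= f j) -> 0 <= rsum n f.
Proof.
  induction n as [|n IH]; intros Hf; simpl; [lra|].
  assert (0 <= rsum n f) by (apply IH; intros; apply Hf; lia).
  assert (0 <= f n) by (apply Hf; lia).
  lra.
Qed.

Lemma rsum_ge_term n f i :
  (forall j, (j < n)%nat -> 0 <= f j) -> (i < n)%nat -> f i <= rsum n f.
Proof.
  induction n as [|n IH]; intros Hf Hi; simpl; [lia|].
  assert (0 <= rsum n f) by (apply rsum_nonneg; intros; apply Hf; lia).
  destruct (Nat.eq_dec i n) as [->|Hin]; [lra|].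
  assert (f i <= rsum n f) by (apply IH; [intros; apply Hf | ]; lia).
  assert (0 <= f n) by (apply Hf; lia).
  lra.
Qed.

Lemma rsum_eq0_nonneg n f :
  (forall j, (j < n)%nat -> 0 <= f j) -> rsum n f = 0 ->
  forall j, (j < n)%nat -> f j = 0.
Proof.
  intros Hf H0 j Hj.
  pose proof (rsum_ge_term n f j Hf Hj). pose proof (Hf j Hj). lra.
Qed.

Lemma rsum_first_two n f :
  (2 <= n)%nat -> (forall k, (2 <= k)%nat -> f k = 0) ->
  rsum n f = f 0%nat + f 1%nat.
Proof.
  intros Hn Hf; induction n as [|n IH]; [lia|].
  destruct (Nat.eq_dec n 1) as [->|Hn1]; [simpl; ring|].
  simpl; rewrite IH, (Hf n) by lia; ring.
Qed.

Lemma rminf_le m f i : (i < S m)%nat -> rminf (S m) f <= f i.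
Proof.
  revert i; induction m as [|m IH]; intros i Hi.
  - replace i with 0%nat by lia; simpl; lra.
  - change (rminf (S (S m)) f) with (Rmin (rminf (S m) f) (f (S m))).
    destruct (Nat.eq_dec i (S m)) as [->|Him]; [apply Rmin_r|].
    eapply Rle_trans; [apply Rmin_l | apply IH; lia].
Qed.

Lemma rminf_attained m f : exists i, (i < S m)%nat /\ rminf (S m) f = f i.
Proof.
  induction m as [|m [i [Hi E]]]; [exists 0%nat; split; [lia|reflexivity]|].
  change (rminf (S (S m)) f) with (Rmin (rminf (S m) f) (f (S m))).
  unfold Rmin; destruct (Rle_dec _ _).
  - exists i; split; [lia|exact E].
  - exists (S m); split; [lia|reflexivity].
Qed.

Lemma exists_argmax n (u : nat -> R) :
  (1 <= n)%nat -> exists i, (i < n)%nat /\ forall j, (j < n)%nat -> u j <= u i.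
Proof.
  intros Hn; induction n as [|n IH]; [lia|].
  destruct (Nat.eq_dec n 0) as [->|Hn0].
  { exists 0%nat; split; [lia|]; intros j Hj; replace j with 0%nat by lia; lra. }
  destruct IH as [i [Hi Hmax]]; [lia|].
  destruct (Rle_dec (u n) (u i)) as [Hle|Hgt].
  - exists i; split; [lia|]; intros j Hj.
    destruct (Nat.eq_dec j n) as [->|]; [exact Hle | apply Hmax; lia].
  - exists n; split; [lia|]; intros j Hj.
    destruct (Nat.eq_dec j n) as [->|]; [lra|].
    assert (u j <= u i) by (apply Hmax; lia); lra.
Qed.

Lemma Rpower_pos x y : 0 < Rpower x y.
Proof. apply exp_pos. Qed.

Lemma Rpower_half x : 0 < x -> Rpower x (1 / 2) = sqrt x.
Proof. intros Hx; replace (1 / 2) with (/ 2) by lra; apply Rpower_sqrt, Hx. Qed.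

Section MaximumPrinciple.

Variables (n : nat) (w : nat -> nat -> R) (r : R).
Hypothesis Hw : weighted_graph n w.

Lemma laplacian_opp u i :
  laplacian n w r (fun x => - u x) i = - laplacian n w r u i.
Proof.
  unfold laplacian.
  rewrite (rsum_ext n _ (fun j => -1 * (w i j * (u i - u j)))) by (intros; ring).
  rewrite rsum_scal; ring.
Qed.

(* At a vertex j where u is maximal, Delta u j is a positive multiple of a sum
   of nonnegative terms w_jk (u_j - u_k), while lam * u j <= 0; so every term
   vanishes and the maximum propagates to the neighbours of j. *)
Lemma eigenvector_max_propagates lam u i0 :
  lam <= 0 ->
  (forall i, (i < n)%nat -> laplacian n w r u i = lam * u i) ->
  (forall j, (j < n)%nat -> u j <= u i0) -> 0 <= u i0 ->
  forall k, reach n w i0 k -> u k = u i0.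
Proof.
  intros Hlam Heig Hmax Hpos k Hreach.
  induction Hreach as [|j k Hreach IH Hj Hk Hjk]; [reflexivity|].
  assert (Hterm : forall l, (l < n)%nat -> 0 <= w j l * (u j - u l)).
  { intros l Hl; destruct (Hw j l Hj Hl) as [_ [Hwjl _]].
    pose proof (Hmax l Hl); apply Rmult_le_pos; lra. }
  pose proof (rsum_nonneg n _ Hterm).
  pose proof (Rpower_pos (deg n w j) (- r)).
  pose proof (Heig j Hj) as E; unfold laplacian in E.
  assert (Hsum0 : rsum n (fun l => w j l * (u j - u l)) = 0) by nra.
  pose proof (rsum_eq0_nonneg n _ Hterm Hsum0 k Hk) as Hjk0; simpl in Hjk0.
  assert (u j - u k = 0) by (apply (Rmult_eq_reg_l (w j k)); lra).
  lra.
Qed.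

Hypothesis Hconn : connected n w.

Lemma eigenvector_nonpos_const lam u :
  (1 <= n)%nat -> lam <= 0 ->
  (forall i, (i < n)%nat -> laplacian n w r u i = lam * u i) ->
  exists c, forall k, (k < n)%nat -> u k = c.
Proof.
  intros Hn Hlam Heig.
  destruct (exists_argmax n u Hn) as [i0 [Hi0 Hmax]].
  destruct (Rle_dec 0 (u i0)) as [Hpos|Hneg].
  - exists (u i0); intros k Hk.
    apply (eigenvector_max_propagates lam u i0); auto.
  - destruct (exists_argmax n (fun x => - u x) Hn) as [i1 [Hi1 Hmax1]].
    assert (Heig' : forall i, (i < n)%nat ->
              laplacian n w r (fun x => - u x) i = lam * - u i).
    { intros i Hi; rewrite laplacian_opp, Heig by exact Hi; ring. }
    assert (0 <= - u i1) by (pose proof (Hmax1 i0 Hi0); lra).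
    exists (u i1); intros k Hk.
    enough (- u k = - u i1) by lra.
    apply (eigenvector_max_propagates lam (fun x => - u x) i1); auto.
Qed.

Lemma spectrum_lam1_pos lam :
  (2 <= n)%nat -> laplacian_spectrum n w r lam -> 0 < lam 1%nat.
Proof.
  intros Hn [Hord [phi [Hindep Heig]]].
  destruct (Rlt_dec 0 (lam 1%nat)) as [Hpos|Hnpos]; [exact Hpos|exfalso].
  assert (lam 0%nat <= 0) by (pose proof (Hord 0%nat 1%nat ltac:(lia) ltac:(lia)); lra).
  destruct (eigenvector_nonpos_const (lam 0%nat) (phi 0%nat)) as [a Ha];
    [lia | lra | intros; apply Heig; lia |].
  destruct (eigenvector_nonpos_const (lam 1%nat) (phi 1%nat)) as [b Hb];
    [lia | lra | intros; apply Heig; lia |].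
  (* Two constant eigenvectors: b phi_0 - a phi_1 = 0 forces a = 0, and then phi_0 = 0. *)
  pose (c k := if Nat.eqb k 0 then b else if Nat.eqb k 1 then - a else 0).
  assert (Ha0 : c 1%nat = 0).
  { apply Hindep; [intros i Hi | lia].
    rewrite rsum_first_two; [| exact Hn | intros [|[|k]] Hk; [lia | lia | unfold c; simpl; ring]].
    unfold c; simpl; rewrite Ha, Hb by exact Hi; ring. }
  pose (e k := if Nat.eqb k 0 then 1 else 0).
  assert (e 0%nat = 0).
  { apply Hindep; [intros i Hi | lia].
    rewrite rsum_first_two; [| exact Hn | intros [|k] Hk; [lia | unfold e; simpl; ring]].
    unfold c in Ha0; unfold e; simpl in *; rewrite Ha by exact Hi; lra. }
  unfold e in *; simpl in *; lra.
Qed.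

End MaximumPrinciple.

Lemma dmin_pos_le n w :
  (1 <= n)%nat -> (forall i, (i < n)%nat -> 0 < deg n w i) ->
  0 < dmin n w /\ forall i, (i < n)%nat -> dmin n w <= deg n w i.
Proof.
  intros Hn Hdeg; unfold dmin; destruct n as [|m]; [lia|]; split.
  - destruct (rminf_attained m (deg (S m) w)) as [i [Hi ->]]; apply Hdeg, Hi.
  - intros i Hi; apply rminf_le, Hi.
Qed.

Lemma vol_ge_dmin n w r (T : nat -> bool) :
  (forall i, (i < n)%nat -> 0 < deg n w i) -> 0 <= r ->
  (exists i, (i < n)%nat /\ T i = true) ->
  Rpower (dmin n w) r <= vol n w r T.
Proof.
  intros Hdeg Hr [i [Hi HTi]].
  destruct (dmin_pos_le n w ltac:(lia) Hdeg) as [HD0 HDle].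
  unfold vol; eapply Rle_trans; [| apply (rsum_ge_term _ _ i); [|exact Hi]].
  - cbv beta; rewrite HTi; apply Rle_Rpower_l; [exact Hr | split; [exact HD0 | apply HDle, Hi]].
  - intros j _; destruct (T j); [left; apply Rpower_pos | lra].
Qed.

Lemma vol_fullset n w r S :
  vol n w r fullset = vol n w r S + vol n w r (compl S).
Proof.
  unfold vol; rewrite <- rsum_plus; apply rsum_ext; intros i _.
  unfold compl, fullset; destruct (S i); simpl; ring.
Qed.

Lemma tau_rho_arg_le x a :
  0 < x <= a -> 1 + / 2 * sqrt x * Rpower a (- (1 / 2)) <= 3 / 2.
Proof.
  intros [Hx Hxa].
  rewrite Rpower_Ropp, Rpower_half by lra.
  pose proof (sqrt_lt_R0 a ltac:(lra)).
  assert (sqrt x <= sqrt a) by (apply sqrt_le_1_alt, Hxa).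
  enough (sqrt x * / sqrt a <= 1) by lra.
  apply (Rmult_le_reg_r (sqrt a)); [lra|].
  rewrite Rmult_assoc, Rinv_l; lra.
Qed.

Lemma unbalanced_cube_lt a b m :
  0 < m -> m <= a -> m <= b -> (a - b) ^ 2 * m < a * b * (a + b).
Proof.
  intros Hm Ha Hb.
  assert (0 < a * b) by (apply Rmult_lt_0_compat; lra).
  destruct (Rle_dec b a).
  - assert ((a - b) ^ 2 <= a * a)
      by (assert (0 <= b * (2 * a - b)) by (apply Rmult_le_pos; lra); nra).
    assert ((a - b) ^ 2 * m <= a * a * b) by (apply Rmult_le_compat; nra).
    assert (0 < a * b * b) by (apply Rmult_lt_0_compat; lra).
    nra.
  - assert ((a - b) ^ 2 <= b * b)
      by (assert (0 <= a * (2 * b - a)) by (apply Rmult_le_pos; lra); nra).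
    assert ((a - b) ^ 2 * m <= b * b * a) by (apply Rmult_le_compat; nra).
    assert (0 < a * b * a) by (apply Rmult_lt_0_compat; lra).
    nra.
Qed.

Lemma tau_t_arg_gt2 a b m :
  0 < m -> m <= a -> m <= b -> a <> b ->
  2 < sqrt a * sqrt b / (sqrt (a + b) * Rabs (a / (a + b) - / 2) * sqrt m).
Proof.
  intros Hm Ha Hb Hab.
  set (q := Rabs (a / (a + b) - / 2)).
  set (den := sqrt (a + b) * q * sqrt m).
  assert (Hq2 : q * q = ((a - b) / (2 * (a + b))) ^ 2).
  { unfold q; rewrite <- Rabs_mult, Rabs_pos_eq by apply Rle_0_sqr; field; lra. }
  assert (Hq : 0 < q).
  { unfold q; apply Rabs_pos_lt; intros H0.
    apply Hab; apply (f_equal (fun x => 2 * (a + b) * x)) in H0.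
    field_simplify in H0; lra. }
  assert (Hden : 0 < den).
  { unfold den; repeat apply Rmult_lt_0_compat; [apply sqrt_lt_R0; lra | exact Hq |].
    apply sqrt_lt_R0, Hm. }
  assert (Hden2 : (2 * den) * (2 * den) = 4 * (a + b) * (q * q) * m).
  { unfold den.
    replace (2 * (sqrt (a + b) * q * sqrt m) * (2 * (sqrt (a + b) * q * sqrt m)))
      with (4 * (sqrt (a + b) * sqrt (a + b)) * (q * q) * (sqrt m * sqrt m)) by ring.
    rewrite !sqrt_sqrt by lra; ring. }
  assert (Hlt : 2 * den < sqrt a * sqrt b).
  { rewrite <- (sqrt_square (2 * den)), Hden2, <- sqrt_mult by lra.
    apply sqrt_lt_1_alt; split; [nra|].
    rewrite Hq2; apply (Rmult_lt_reg_r (a + b)); [lra|].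
    replace (4 * (a + b) * ((a - b) / (2 * (a + b))) ^ 2 * m * (a + b))
      with ((a - b) ^ 2 * m) by (field; lra).
    apply unbalanced_cube_lt; assumption. }
  apply (Rmult_lt_reg_r den); [exact Hden|].
  replace (sqrt a * sqrt b / den * den) with (sqrt a * sqrt b) by (field; lra).
  exact Hlt.
Qed.

Lemma ln_ratio_compare l2 lN A B :
  0 < l2 <= lN -> l2 / lN < ln (sqrt 2) / ln (3 / 2) ->
  0 < A <= 3 / 2 -> 2 < B ->
  / lN * ln A < / l2 * ln B.
Proof.
  intros [Hl2 HlN] Hratio [HA HA32] HB.
  assert (L32 : 0 < ln (3 / 2)) by (rewrite <- ln_1; apply ln_increasing; lra).
  assert (1 < sqrt 2) by (rewrite <- sqrt_1; apply sqrt_lt_1_alt; lra).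
  assert (sqrt 2 < 2) by (pose proof (sqrt_sqrt 2 ltac:(lra)); nra).
  assert (L2 : 0 < ln (sqrt 2)) by (rewrite <- ln_1; apply ln_increasing; lra).
  assert (ln A <= ln (3 / 2)).
  { destruct (Rle_lt_or_eq_dec A (3 / 2) HA32) as [Hlt| ->]; [|lra].
    left; apply ln_increasing; lra. }
  assert (ln (sqrt 2) < ln B) by (apply ln_increasing; lra).
  assert (Hcross : l2 * ln (3 / 2) < lN * ln (sqrt 2)).
  { apply (Rmult_lt_compat_r (lN * ln (3 / 2))) in Hratio; [|nra].
    replace (l2 / lN * (lN * ln (3 / 2))) with (l2 * ln (3 / 2)) in Hratio by (field; lra).
    replace (ln (sqrt 2) / ln (3 / 2) * (lN * ln (3 / 2))) with (lN * ln (sqrt 2))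
      in Hratio by (field; lra).
    exact Hratio. }
  apply Rle_lt_trans with (/ lN * ln (3 / 2)).
  { apply Rmult_le_compat_l; [left; apply Rinv_0_lt_compat|]; lra. }
  apply Rlt_trans with (/ l2 * ln (sqrt 2)).
  2: { apply Rmult_lt_compat_l; [apply Rinv_0_lt_compat|]; lra. }
  apply (Rmult_lt_reg_r (l2 * lN)); [nra|].
  replace (/ lN * ln (3 / 2) * (l2 * lN)) with (l2 * ln (3 / 2)) by (field; lra).
  replace (/ l2 * ln (sqrt 2) * (l2 * lN)) with (lN * ln (sqrt 2)) by (field; lra).
  exact Hcross.
Qed.

Theorem mainTheorem12
  (n : nat) (w : nat -> nat -> R) (r : R) (lam : nat -> R) (S : nat -> bool)
  (Hn : (2 <= n)%nat)
  (Hw : weighted_graph n w)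
  (Hdeg : forall i, (i < n)%nat -> 0 < deg n w i)
  (Hr : 0 <= r <= 1)
  (Hconn : connected n w)
  (Hspec : laplacian_spectrum n w r lam)
  (HSne : exists i, (i < n)%nat /\ S i = true)
  (HSnV : exists i, (i < n)%nat /\ S i = false)
  (HRS : RS n w r S <> / 2)
  (Hratio : lam 1%nat / lam (n - 1)%nat < ln (sqrt 2) / ln (3 / 2)) :
  tau_rho n w r lam S < tau_t n w r lam S.
Proof.
  pose proof (spectrum_lam1_pos n w r Hw Hconn lam Hn Hspec) as Hlam1.
  assert (Hlam_le : lam 1%nat <= lam (n - 1)%nat)
    by (destruct Hspec as [Hord _]; apply Hord; lia).
  set (D := dmin n w); set (m := Rpower D r).
  set (a := vol n w r S); set (b := vol n w r (compl S)).
  assert (Hm : 0 < m) by apply Rpower_pos.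
  assert (Hma : m <= a) by (apply vol_ge_dmin; [exact Hdeg | lra | exact HSne]).
  assert (Hmb : m <= b).
  { apply vol_ge_dmin; [exact Hdeg | lra |].
    destruct HSnV as [i [Hi HSi]]; exists i; unfold compl; rewrite HSi; auto. }
  assert (Hhalf : Rpower D (r / 2) = sqrt m)
    by (unfold m; rewrite <- Rpower_half, Rpower_mult by exact Hm; f_equal; lra).
  unfold tau_rho, tau_t, RS; rewrite (vol_fullset n w r S); fold D a b.
  rewrite Hhalf, !Rpower_half by lra.
  apply ln_ratio_compare; [lra | exact Hratio | |].
  - split; [| apply tau_rho_arg_le; lra].
    pose proof (sqrt_lt_R0 m Hm); pose proof (Rpower_pos a (- (1 / 2))); nra.
  - apply tau_t_arg_gt2; try assumption.
    intros Hab; apply HRS; unfold RS; rewrite (vol_fullset n w r S); fold a b.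
    rewrite Hab; field; lra.
Qed.
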